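(* For the decoupled single-device problem with parameters $\varphi>0$, $p\in(0,1)$, let $\Gamma(c)$ be the optimal threshold for sampling cost $c\ge0$ and let the passive set be $\mathcal{Q}(c)=\{n\in\mathbb{Z}:0\le n<\Gamma(c)\}$. Then $\Gamma(c)$ is nondecreasing in $c$; equivalently, for all $0\le c_1<c_2$, $\mathcal{Q}(c_1)\subseteq\mathcal{Q}(c_2)$. That is, the decoupled problem is indexable (and hence so is the $M$-device flow-sampling problem, each of whose devices yields such a decoupled problem).
   Context: Decoupled single-device problem: a Markov decision process with state space $\{0,1,2,\dots\}$ (a counter $n$) and action set $\{0,1\}$ ($0$ = rest, $1$ = sample). Transitions: from state $n$ under action $1$ go to state $0$ with probability $1$; under action $0$ go to state $0$ with probability $p$ and to state $n+1$ with probability $1-p$. Immediate cost: $C(n,1)=c+\varphi n$ and $C(n,0)=\varphi n$, where $c\ge0$ is a fixed sampling cost. The objective is to minimize the long-run average cost. The average-cost optimal policy is a threshold policy: for each $c$ there is an integer $\Gamma(c)\ge0$ such that it is optimal to rest in states $n<\Gamma(c)$ and to sample in states $n\ge\Gamma(c)$. A problem is called indexable if the passive set (set of states where resting is optimal) is monotone nondecreasing in the sampling cost $c$. *)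

From Stdlib Require Import Reals.
From Coquelicot Require Import Coquelicot.
Open Scope R_scope.

(* States: counters n : nat.  Actions: bool (true = sample, false = rest). *)

Definition cost (phi c : R) (n : nat) (a : bool) : R :=
  (if a then c else 0) + phi * INR n.

Definition policy := nat -> bool.

Definition threshold_policy (G : nat) : policy :=
  fun n => Nat.leb G n.

(* Expected total cost over the first T decision epochs, starting in state n,
   under policy pi.  Transitions: action 1 -> state 0 w.p. 1;
   action 0 -> state 0 w.p. p, state n+1 w.p. 1-p. *)
Fixpoint total_cost (phi p c : R) (pi : policy) (T : nat) : nat -> R :=
  match T with
  | O => fun _ => 0
  | S T' => fun n =>
      cost phi c n (pi n) +
      (if pi n then total_cost phi p c pi T' 0%nat
       else p * total_cost phi p c pi T' 0%nat
            + (1 - p) * total_cost phi p c pi T' (S n))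
  end.

Definition avg_cost (phi p c : R) (pi : policy) (n : nat) : Rbar :=
  LimSup_seq (fun T => total_cost phi p c pi T n / INR T).

Definition optimal_threshold (phi p c : R) (G : nat) : Prop :=
  forall (pi : policy) (n : nat),
    Rbar_le (avg_cost phi p c (threshold_policy G) n) (avg_cost phi p c pi n).

Definition passive_set (G : nat) : nat -> Prop := fun n => (n < G)%nat.

From Stdlib Require Import Reals Lra Lia Arith.
From Coquelicot Require Import Coquelicot.
Open Scope R_scope.

(* Fix a threshold G and write q = 1 - p.  The threshold policy with threshold
   G has gain g(c, G) = (c + phi G + beta G) / (alpha G + 1) and bias
   h(n) = alpha n * g - beta n, where alpha, beta solve the linear recursions
   alpha (n+1) = (alpha n + 1)/q and beta (n+1) = (beta n + phi n)/q.  The pair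
   (g, h) solves the Poisson equation of the chain on the states 0..G, so the
   deviation total_cost T n - T g - h n contracts (it is a convex combination
   of earlier deviations), hence stays bounded; consequently the long-run
   average cost of the threshold policy is exactly g(c, G) from every state.

   Indexability then follows from an exchange argument: if G1 is optimal for
   c1 and G2 for c2 > c1, comparing the two gains at both costs and using that
   alpha is strictly increasing (so 1/(alpha G + 1) strictly decreases) forces
   G1 <= G2, and the passive sets {n < G} are then nested. *)

Lemma bounded_on_initial_segment (f : nat -> R) (N : nat) :
  exists M, forall k, (k <= N)%nat -> Rabs (f k) <= M.
Proof.
  induction N as [|N [M HM]].
  - exists (Rabs (f 0%nat)). intros k Hk. replace k with 0%nat by lia. lra.
  - exists (Rmax M (Rabs (f (S N)))). intros k Hk.
    destruct (Nat.eq_dec k (S N)) as [->|Hne].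
    + apply Rmax_r.
    + eapply Rle_trans; [apply HM; lia | apply Rmax_l].
Qed.

Lemma is_lim_seq_average_of_bounded_deviation (u : nat -> R) (g K : R) :
  (forall T, Rabs (u T - INR T * g) <= K) ->
  is_lim_seq (fun T => u T / INR T) g.
Proof.
  intro Hdev.
  assert (HK_T : is_lim_seq (fun T => K / INR T) 0).
  { replace (Finite 0) with (Rbar_mult K 0) by (simpl; f_equal; ring).
    apply is_lim_seq_scal_l.
    replace (Finite 0) with (Rbar_inv p_infty) by reflexivity.
    apply is_lim_seq_inv; [apply is_lim_seq_INR | discriminate]. }
  apply is_lim_seq_le_le_loc with
    (u := fun T => g - K / INR T) (w := fun T => g + K / INR T).
  - exists 1%nat. intros T HT.
    assert (HT0 : 0 < INR T) by (apply lt_0_INR; lia).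
    specialize (Hdev T). apply Rabs_le_between in Hdev.
    replace (u T / INR T) with (g + (u T - INR T * g) / INR T) by (field; lra).
    unfold Rdiv. split; apply Rplus_le_compat_l.
    + rewrite Ropp_mult_distr_l. apply Rmult_le_compat_r;
        [left; apply Rinv_0_lt_compat|]; lra.
    + apply Rmult_le_compat_r; [left; apply Rinv_0_lt_compat|]; lra.
  - replace (Finite g) with (Rbar_minus g 0) by (simpl; f_equal; ring).
    apply is_lim_seq_minus'; [apply is_lim_seq_const | exact HK_T].
  - replace (Finite g) with (Rbar_plus g 0) by (simpl; f_equal; ring).
    apply is_lim_seq_plus'; [apply is_lim_seq_const | exact HK_T].
Qed.

(* Coefficients of the bias: alpha n is the slope of h n in the gain, beta n
   the accumulated holding cost, both obtained by solving the rest-equation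
   h n + g = phi n + q h (n+1) forwards from h 0 = 0. *)
Fixpoint alpha (p : R) (n : nat) : R :=
  match n with O => 0 | S k => (alpha p k + 1) / (1 - p) end.

Fixpoint beta (phi p : R) (n : nat) : R :=
  match n with O => 0 | S k => (beta phi p k + phi * INR k) / (1 - p) end.

Lemma alpha_nonneg (p : R) (n : nat) : p < 1 -> 0 <= alpha p n.
Proof.
  intro Hp. induction n as [|n IH]; simpl; [lra|].
  apply Rle_mult_inv_pos; lra.
Qed.

(* alpha grows strictly: (alpha n + 1)/(1 - p) >= alpha n + 1 since 1 - p <= 1.
   This is what makes the gain weight 1/(alpha G + 1) strictly decreasing. *)
Lemma alpha_lt_succ (p : R) (n : nat) : 0 <= p < 1 -> alpha p n < alpha p (S n).
Proof.
  intro Hp. pose proof (alpha_nonneg p n (proj2 Hp)). simpl.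
  apply (Rmult_lt_reg_r (1 - p)); [lra|].
  unfold Rdiv. rewrite Rmult_assoc, Rinv_l by lra. nra.
Qed.

Lemma alpha_strictly_increasing (p : R) (a b : nat) :
  0 <= p < 1 -> (a < b)%nat -> alpha p a < alpha p b.
Proof.
  intros Hp Hab. induction Hab as [|b _ IH].
  - apply alpha_lt_succ, Hp.
  - eapply Rlt_trans; [exact IH | apply alpha_lt_succ, Hp].
Qed.

Section ThresholdPolicy.
Variables (phi p : R).
Hypothesis Hp : 0 < p < 1.

Definition gain (c : R) (G : nat) : R :=
  (c + phi * INR G + beta phi p G) / (alpha p G + 1).

Definition bias (c : R) (G : nat) (n : nat) : R :=
  alpha p n * gain c G - beta phi p n.

Lemma bias_0 (c : R) (G : nat) : bias c G 0 = 0.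
Proof. unfold bias; simpl; ring. Qed.

Lemma poisson_rest (c : R) (G n : nat) :
  bias c G n + gain c G = phi * INR n + (1 - p) * bias c G (S n).
Proof. unfold bias. simpl. field. lra. Qed.

Lemma poisson_sample (c : R) (G : nat) :
  bias c G G + gain c G = c + phi * INR G.
Proof.
  unfold bias, gain. field.
  pose proof (alpha_nonneg p G (proj2 Hp)). lra.
Qed.

Definition deviation (c : R) (G : nat) (T n : nat) : R :=
  total_cost phi p c (threshold_policy G) T n - INR T * gain c G - bias c G n.

Lemma deviation_rest (c : R) (G T n : nat) : (n < G)%nat ->
  deviation c G (S T) n = p * deviation c G T 0 + (1 - p) * deviation c G T (S n).
Proof.
  intro Hn. unfold deviation. rewrite S_INR. simpl.
  replace (threshold_policy G n) with false
    by (symmetry; apply Nat.leb_gt; lia).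
  unfold cost. pose proof (poisson_rest c G n). rewrite bias_0. lra.
Qed.

Lemma deviation_sample (c : R) (G T : nat) :
  deviation c G (S T) G = deviation c G T 0.
Proof.
  unfold deviation. rewrite S_INR. simpl.
  replace (threshold_policy G G) with true by (symmetry; apply Nat.leb_refl).
  unfold cost.
  pose proof (poisson_sample c G). rewrite bias_0. lra.
Qed.

Lemma deviation_bounded (c : R) (G : nat) (M : R) :
  (forall k, (k <= G)%nat -> Rabs (bias c G k) <= M) ->
  forall T n, (n <= G)%nat -> Rabs (deviation c G T n) <= M.
Proof.
  intros HM T. induction T as [|T IH]; intros n Hn.
  - unfold deviation. simpl.
    replace (0 - 0 * gain c G - bias c G n) with (- bias c G n) by ring.
    rewrite Rabs_Ropp. auto.
  - destruct (Nat.eq_dec n G) as [->|Hne].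
    + rewrite deviation_sample. apply IH. lia.
    + rewrite deviation_rest by lia.
      pose proof (IH 0%nat ltac:(lia)). pose proof (IH (S n) ltac:(lia)).
      eapply Rle_trans; [apply Rabs_triang|].
      rewrite !Rabs_mult, (Rabs_right p), (Rabs_right (1 - p)) by lra. nra.
Qed.

(* From every initial state, the total cost stays within a bounded distance
   of T * gain: states above G are left to 0 at the first step. *)
Lemma total_cost_bounded_deviation (c : R) (G n : nat) :
  exists K, forall T,
    Rabs (total_cost phi p c (threshold_policy G) T n - INR T * gain c G) <= K.
Proof.
  destruct (bounded_on_initial_segment (bias c G) G) as [M HM].
  pose proof (deviation_bounded c G M HM) as Hdev.
  destruct (le_lt_dec n G) as [Hn|Hn].
  - exists (M + Rabs (bias c G n)). intro T. specialize (Hdev T n Hn).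
    unfold deviation in Hdev.
    eapply Rle_trans; [|apply Rplus_le_compat_r, Hdev].
    eapply Rle_trans; [|apply Rabs_triang]. right. f_equal. ring.
  - exists (Rabs (c + phi * INR n - gain c G) + M). intros [|T].
    + simpl. replace (0 - 0 * gain c G) with 0 by ring. rewrite Rabs_R0.
      pose proof (Rabs_pos (c + phi * INR n - gain c G)).
      pose proof (HM 0%nat (Nat.le_0_l G)). pose proof (Rabs_pos (bias c G 0)). lra.
    + specialize (Hdev T 0%nat (Nat.le_0_l G)). unfold deviation in Hdev.
      rewrite bias_0 in Hdev. rewrite S_INR. simpl.
      replace (threshold_policy G n) with true
        by (symmetry; apply Nat.leb_le; lia).
      unfold cost.
      eapply Rle_trans; [|apply Rplus_le_compat_l, Hdev].
      eapply Rle_trans; [|apply Rabs_triang]. right. f_equal. ring.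
Qed.

Lemma avg_cost_threshold (c : R) (G n : nat) :
  avg_cost phi p c (threshold_policy G) n = Finite (gain c G).
Proof.
  destruct (total_cost_bounded_deviation c G n) as [K HK].
  unfold avg_cost. apply is_LimSup_seq_unique, is_lim_LimSup_seq.
  exact (is_lim_seq_average_of_bounded_deviation _ _ K HK).
Qed.

End ThresholdPolicy.

Lemma exchange_contradiction (c1 c2 K1 K2 w1 w2 : R) :
  c1 < c2 -> w1 < w2 ->
  (c1 + K1) * w1 <= (c1 + K2) * w2 ->
  (c2 + K2) * w2 <= (c2 + K1) * w1 -> False.
Proof. intros Hc Hw H1 H2. nra. Qed.

Lemma optimal_threshold_monotone (phi p c1 c2 : R) (G1 G2 : nat) :
  0 < p < 1 -> c1 < c2 ->
  optimal_threshold phi p c1 G1 -> optimal_threshold phi p c2 G2 ->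
  (G1 <= G2)%nat.
Proof.
  intros Hp Hc Opt1 Opt2.
  destruct (le_lt_dec G1 G2) as [|Hlt]; [assumption | exfalso].
  specialize (Opt1 (threshold_policy G2) 0%nat).
  specialize (Opt2 (threshold_policy G1) 0%nat).
  rewrite !avg_cost_threshold in Opt1, Opt2 by exact Hp.
  simpl in Opt1, Opt2. unfold gain, Rdiv in Opt1, Opt2.
  assert (Hw : / (alpha p G1 + 1) < / (alpha p G2 + 1)).
  { pose proof (alpha_nonneg p G2 (proj2 Hp)).
    pose proof (alpha_strictly_increasing p G2 G1 ltac:(lra) Hlt).
    apply Rinv_lt_contravar; nra. }
  apply (exchange_contradiction c1 c2 (phi * INR G1 + beta phi p G1)
           (phi * INR G2 + beta phi p G2) _ _ Hc Hw); lra.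
Qed.

Theorem lemma6 (phi p c1 c2 : R) (G1 G2 : nat) :
  0 < phi -> 0 < p < 1 -> 0 <= c1 -> c1 < c2 ->
  optimal_threshold phi p c1 G1 ->
  optimal_threshold phi p c2 G2 ->
  (G1 <= G2)%nat /\ (forall n : nat, passive_set G1 n -> passive_set G2 n).
Proof.
  intros _ Hp _ Hc Opt1 Opt2.
  pose proof (optimal_threshold_monotone phi p c1 c2 G1 G2 Hp Hc Opt1 Opt2) as HG.
  split; [exact HG|].
  intros n Hn. unfold passive_set in *. lia.
Qed.
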